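(* Let $n\ge 4$, let $a_1,\dots,a_n$ be real numbers, $C(t)=\sum_{j=1}^n a_j\cos jt$, $S(t)=\sum_{j=1}^n a_j\sin jt$. Let $m$ be an integer with $2\le m\le n/2$, let $t_1,\dots,t_m\in(0,\pi)$ be pairwise distinct, and suppose there are real numbers $b_m,\dots,b_{n-m}$ such that for all real $t$ $$S(t)=\prod_{j=1}^m(\cos t-\cos t_j)\cdot\sum_{k=m}^{n-m}b_k\sin kt .$$ Then $C(t_1)=C(t_2)=\dots=C(t_m)$. *)

From Stdlib Require Import Reals List.
Open Scope R_scope.

(* sum_{k=lo}^{hi} f k  (empty, i.e. 0, when hi < lo) *)
Definition rsum (lo hi : nat) (f : nat -> R) : R :=
  fold_right Rplus 0 (map f (seq lo (S hi - lo))).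

(* prod_{k=lo}^{hi} f k  (empty, i.e. 1, when hi < lo) *)
Definition rprod (lo hi : nat) (f : nat -> R) : R :=
  fold_right Rmult 1 (map f (seq lo (S hi - lo))).

Definition Cpoly (n : nat) (a : nat -> R) (t : R) : R :=
  rsum 1 n (fun j => a j * cos (INR j * t)).
Definition Spoly (n : nat) (a : nat -> R) (t : R) : R :=
  rsum 1 n (fun j => a j * sin (INR j * t)).

(* Both sin (j t) and cos (j t) satisfy F((j+1)t) = 2 cos t F(jt) - F((j-1)t)
   for j >= 1.  Hence multiplying a trigonometric sum whose frequencies are all
   >= 1 by (cos t - c) changes its coefficients by one and the same rule, whether
   the basis functions are sines or cosines.  Expanding
   prod_j (cos t - cos t_j) * sum_k b_k sin (k t) this way gives coefficients g_k;
   by uniqueness of sine coefficients g_k = a_k for k >= 1, and the same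
   expansion on the cosine side yields
   C(t) = prod_j (cos t - cos t_j) * sum_k b_k cos (k t) - g_0,
   which equals -g_0 at every t_j. *)
From Stdlib Require Import Reals List Lia Lra.
Open Scope R_scope.

Definition lsum (s : list nat) (f : nat -> R) : R := fold_right Rplus 0 (map f s).

Lemma lsum_cons x s f : lsum (x :: s) f = f x + lsum s f.
Proof. reflexivity. Qed.

Lemma lsum_ext_in s f g : (forall j, In j s -> f j = g j) -> lsum s f = lsum s g.
Proof.
  induction s as [|x s IH]; intros H; unfold lsum in *; simpl; auto.
  rewrite (H x (or_introl eq_refl)), IH; auto.
  intros; apply H; right; auto.
Qed.

Lemma lsum_eq0 s f : (forall j, In j s -> f j = 0) -> lsum s f = 0.
Proof.
  intros H. rewrite (lsum_ext_in s f (fun _ => 0)) by auto.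
  unfold lsum; clear H; induction s; simpl; [|rewrite IHs]; ring.
Qed.

Lemma lsum_add s f g : lsum s (fun j => f j + g j) = lsum s f + lsum s g.
Proof. unfold lsum; induction s; simpl; [|rewrite IHs]; ring. Qed.

Lemma lsum_sub s f g : lsum s (fun j => f j - g j) = lsum s f - lsum s g.
Proof. unfold lsum; induction s; simpl; [|rewrite IHs]; ring. Qed.

Lemma lsum_scal s c f : lsum s (fun j => c * f j) = c * lsum s f.
Proof. unfold lsum; induction s; simpl; [|rewrite IHs]; ring. Qed.

Lemma lsum_app s1 s2 f : lsum (s1 ++ s2) f = lsum s1 f + lsum s2 f.
Proof. unfold lsum; induction s1; simpl; [|rewrite IHs1]; ring. Qed.

Lemma lsum_seq_indicator lo k j0 h : (lo <= j0 < lo + k)%nat ->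
  lsum (seq lo k) (fun j => if Nat.eqb j j0 then h j else 0) = h j0.
Proof.
  revert lo; induction k as [|k IH]; intros lo Hlo; [lia|].
  change (seq lo (S k)) with (lo :: seq (S lo) k); rewrite lsum_cons.
  destruct (Nat.eqb_spec lo j0) as [<-|Hne].
  - rewrite (lsum_eq0 (seq (S lo) k)); [ring|].
    intros j Hj; apply in_seq in Hj.
    destruct (Nat.eqb_spec j lo); [lia|reflexivity].
  - rewrite IH by lia; ring.
Qed.

Lemma rsum_1 n f : rsum 1 n f = lsum (seq 1 n) f.
Proof. unfold rsum, lsum; now replace (S n - 1)%nat with n by lia. Qed.

Definition prod_cos_sub (cs : list R) (t : R) : R :=
  fold_right Rmult 1 (map (fun c => cos t - c) cs).

Lemma prod_cos_sub_root cs t : In (cos t) cs -> prod_cos_sub cs t = 0.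
Proof.
  unfold prod_cos_sub; induction cs as [|c cs IH]; simpl; [tauto|].
  intros [<-|Hin]; [|rewrite IH by auto]; ring.
Qed.

Lemma sine_sum_shift s d h c t :
  2 * lsum s (fun j => d j * (cos (INR j * h) - c) * sin (INR j * t)) =
  lsum s (fun j => d j * sin (INR j * (t + h))) + lsum s (fun j => d j * sin (INR j * (t - h)))
  - 2 * c * lsum s (fun j => d j * sin (INR j * t)).
Proof.
  rewrite <- lsum_add, <- !lsum_scal, <- lsum_sub.
  apply lsum_ext_in; intros k _.
  replace (INR k * (t + h)) with (INR k * t + INR k * h) by ring.
  replace (INR k * (t - h)) with (INR k * t - INR k * h) by ring.
  rewrite sin_plus, sin_minus; ring.
Qed.

Lemma sine_coef_unique N d :
  (forall t, lsum (seq 1 N) (fun j => d j * sin (INR j * t)) = 0) ->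
  forall j, (1 <= j <= N)%nat -> d j = 0.
Proof.
  revert d; induction N as [|N IH]; intros d H j Hj; [lia|].
  assert (HN : 0 < INR (S N)) by (apply lt_0_INR; lia).
  pose proof PI_RGT_0 as Hpi.
  set (h := PI / INR (S N)).
  assert (Hh : INR (S N) * h = PI) by (unfold h; field; lra).
  (* (N+1) h = pi, so the weight cos (j h) - cos ((N+1) h) vanishes at the top
     frequency only. *)
  set (d' := fun j => d j * (cos (INR j * h) - cos (INR (S N) * h))).
  assert (Hshift : forall t, 2 * lsum (seq 1 (S N)) (fun j => d' j * sin (INR j * t)) =
      lsum (seq 1 (S N)) (fun j => d j * sin (INR j * (t + h)))
    + lsum (seq 1 (S N)) (fun j => d j * sin (INR j * (t - h)))
    - 2 * cos (INR (S N) * h) * lsum (seq 1 (S N)) (fun j => d j * sin (INR j * t)))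
    by (intros t; apply sine_sum_shift).
  assert (Hlow : forall k, (1 <= k <= N)%nat -> d k = 0).
  { assert (Hd' : forall t, lsum (seq 1 N) (fun j => d' j * sin (INR j * t)) = 0).
    { assert (Htop : d' (S N) = 0) by (unfold d'; rewrite Rminus_diag_eq; ring).
      intros t. specialize (Hshift t). rewrite !H in Hshift.
      rewrite seq_S, lsum_app, lsum_cons in Hshift; cbn [lsum map fold_right Nat.add] in Hshift.
      rewrite Htop in Hshift. lra. }
    intros k Hk. specialize (IH d' Hd' k Hk); unfold d' in IH.
    rewrite Hh, cos_PI in IH.
    assert (Hk0 : 0 < INR k) by (apply lt_0_INR; lia).
    assert (HkN : INR k < INR (S N)) by (apply lt_INR; lia).
    assert (Hkh : 0 < INR k * h < PI).
    { rewrite <- Hh; split; [apply Rmult_lt_0_compat|apply Rmult_lt_compat_r];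
        unfold h; auto; apply Rdiv_lt_0_compat; lra. }
    pose proof (cos_decreasing_1 (INR k * h) PI) as Hcos; rewrite cos_PI in Hcos.
    apply Rmult_integral in IH; destruct IH as [|IH]; auto; lra. }
  destruct (Nat.eq_dec j (S N)) as [->|]; [|apply Hlow; lia].
  specialize (H (PI / (2 * INR (S N)))).
  rewrite seq_S, lsum_app, lsum_eq0 in H by (intros k Hk; apply in_seq in Hk;
    rewrite Hlow by lia; ring).
  rewrite lsum_cons in H; cbn [lsum map fold_right Nat.add] in H.
  replace (INR (S N) * (PI / (2 * INR (S N)))) with (PI / 2) in H by (field; lra).
  rewrite sin_PI2 in H; lra.
Qed.

(* A trigonometric sum, as a list of (frequency, coefficient) pairs, to be
   evaluated on the basis t |-> F (j t) with F = sin or F = cos. *)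
Definition terms := list (nat * R).

Fixpoint eval_terms (F : R -> R) (l : terms) (t : R) : R :=
  match l with
  | nil => 0
  | p :: l' => snd p * F (INR (fst p) * t) + eval_terms F l' t
  end.

Definition term_coef (l : terms) (k : nat) : R :=
  fold_right Rplus 0 (map (fun p => if Nat.eqb k (fst p) then snd p else 0) l).

Definition freqs_in (lo hi : nat) (l : terms) : Prop :=
  forall p, In p l -> (lo <= fst p <= hi)%nat.

Lemma eval_terms_collect F l N t : freqs_in 0 N l ->
  eval_terms F l t = lsum (seq 0 (S N)) (fun j => term_coef l j * F (INR j * t)).
Proof.
  induction l as [|[j v] l IH]; intros Hl.
  - symmetry; apply lsum_eq0; intros; unfold term_coef; simpl; ring.
  - simpl eval_terms. rewrite IH by (intros p Hp; apply Hl; right; auto).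
    rewrite <- (lsum_seq_indicator 0 (S N) j (fun k => v * F (INR k * t)))
      by (specialize (Hl (j, v) (or_introl eq_refl)); simpl in Hl; lia).
    rewrite <- lsum_add; apply lsum_ext_in; intros k _.
    unfold term_coef; simpl; destruct (Nat.eqb k j); ring.
Qed.

Lemma eval_terms_freq0 F l N t : freqs_in 0 N l ->
  eval_terms F l t =
  term_coef l 0 * F 0 + lsum (seq 1 N) (fun j => term_coef l j * F (INR j * t)).
Proof.
  intros Hl; rewrite (eval_terms_collect F l N t Hl).
  unfold lsum; simpl; now rewrite Rmult_0_l.
Qed.

Lemma eval_terms_seq F b lo hi t :
  eval_terms F (map (fun k => (k, b k)) (seq lo (S hi - lo))) t =
  rsum lo hi (fun k => b k * F (INR k * t)).
Proof.
  unfold rsum; induction (seq lo (S hi - lo)); simpl; [|rewrite IHl]; reflexivity.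
Qed.

(* Product-to-sum: (cos t - c) F(jt) = F((j+1)t)/2 + F((j-1)t)/2 - c F(jt). *)
Definition mul_cos_sub (c : R) (l : terms) : terms :=
  flat_map (fun p => (S (fst p), snd p / 2) :: (pred (fst p), snd p / 2)
                       :: (fst p, - (c * snd p)) :: nil) l.

Fixpoint mul_prod_cos_sub (cs : list R) (l : terms) : terms :=
  match cs with nil => l | c :: cs' => mul_cos_sub c (mul_prod_cos_sub cs' l) end.

Definition chebyshev_rec (F : R -> R) : Prop :=
  forall j t, (1 <= j)%nat ->
    F (INR (S j) * t) = 2 * (cos t * F (INR j * t)) - F (INR (pred j) * t).

Lemma INR_pred j : (1 <= j)%nat -> INR (pred j) = INR j - 1.
Proof. intros; destruct j; [lia|]; simpl pred; rewrite S_INR; ring. Qed.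

Lemma sin_chebyshev_rec : chebyshev_rec sin.
Proof.
  intros j t Hj. rewrite S_INR, INR_pred by auto.
  replace ((INR j + 1) * t) with (INR j * t + t) by ring.
  replace ((INR j - 1) * t) with (INR j * t - t) by ring.
  rewrite sin_plus, sin_minus; ring.
Qed.

Lemma cos_chebyshev_rec : chebyshev_rec cos.
Proof.
  intros j t Hj. rewrite S_INR, INR_pred by auto.
  replace ((INR j + 1) * t) with (INR j * t + t) by ring.
  replace ((INR j - 1) * t) with (INR j * t - t) by ring.
  rewrite cos_plus, cos_minus; ring.
Qed.

Lemma eval_mul_cos_sub F c l t : chebyshev_rec F ->
  (forall p, In p l -> (1 <= fst p)%nat) ->
  eval_terms F (mul_cos_sub c l) t = (cos t - c) * eval_terms F l t.
Proof.
  intros HF; induction l as [|[j v] l IH]; intros Hl; [simpl; ring|].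
  change (mul_cos_sub c ((j, v) :: l)) with
    ((S j, v / 2) :: (pred j, v / 2) :: (j, - (c * v)) :: mul_cos_sub c l).
  cbn [eval_terms fst snd].
  rewrite IH by (intros; apply Hl; right; auto).
  rewrite (HF j t) by (apply (Hl (j, v)); left; auto).
  field.
Qed.

Lemma freqs_mul_prod_cos_sub cs l lo hi : (length cs <= lo)%nat ->
  freqs_in lo hi l -> freqs_in (lo - length cs) (hi + length cs) (mul_prod_cos_sub cs l).
Proof.
  induction cs as [|c cs IH]; simpl; intros Hlen Hl p Hp.
  - specialize (Hl p Hp); lia.
  - apply in_flat_map in Hp; destruct Hp as [q [Hq Hpq]].
    specialize (IH ltac:(lia) Hl q Hq).
    simpl in Hpq; destruct Hpq as [<-|[<-|[<-|[]]]]; simpl; lia.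
Qed.

Lemma eval_mul_prod_cos_sub F cs l lo hi t : chebyshev_rec F ->
  (length cs <= lo)%nat -> freqs_in lo hi l ->
  eval_terms F (mul_prod_cos_sub cs l) t = prod_cos_sub cs t * eval_terms F l t.
Proof.
  intros HF; unfold prod_cos_sub.
  induction cs as [|c cs IH]; simpl; intros Hlen Hl; [ring|].
  rewrite eval_mul_cos_sub, IH by (auto; try lia; intros p Hp;
    pose proof (freqs_mul_prod_cos_sub cs l lo hi ltac:(lia) Hl p Hp); lia).
  ring.
Qed.

Lemma Cpoly_of_factored_Spoly n a cs b lo hi :
  (length cs <= lo)%nat -> (hi + length cs <= n)%nat ->
  (forall t, Spoly n a t = prod_cos_sub cs t * rsum lo hi (fun k => b k * sin (INR k * t))) ->
  exists c0, forall t,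
    Cpoly n a t = prod_cos_sub cs t * rsum lo hi (fun k => b k * cos (INR k * t)) + c0.
Proof.
  intros Hlen Hhi HS.
  set (l := map (fun k => (k, b k)) (seq lo (S hi - lo))).
  set (g := mul_prod_cos_sub cs l).
  assert (Hl : freqs_in lo hi l).
  { intros p Hp; apply in_map_iff in Hp; destruct Hp as [k [<- Hk]].
    apply in_seq in Hk; simpl; lia. }
  assert (Hg : freqs_in 0 n g).
  { intros p Hp; pose proof (freqs_mul_prod_cos_sub cs l lo hi Hlen Hl p Hp); lia. }
  assert (Hexp : forall F t, chebyshev_rec F ->
      prod_cos_sub cs t * rsum lo hi (fun k => b k * F (INR k * t)) =
      term_coef g 0 * F 0 + lsum (seq 1 n) (fun j => term_coef g j * F (INR j * t))).
  { intros F t HF. rewrite <- eval_terms_seq, <- eval_terms_freq0 by auto.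
    symmetry; apply (eval_mul_prod_cos_sub F cs l lo hi); auto. }
  assert (Hcoef : forall j, (1 <= j <= n)%nat -> a j = term_coef g j).
  { intros j Hj. apply Rminus_diag_uniq.
    apply (sine_coef_unique n (fun j => a j - term_coef g j)); auto.
    intros t. rewrite (lsum_ext_in _ _ (fun j => a j * sin (INR j * t)
                                   - term_coef g j * sin (INR j * t))) by (intros; ring).
    rewrite lsum_sub, <- rsum_1.
    fold (Spoly n a t); rewrite HS, (Hexp sin t sin_chebyshev_rec), sin_0; ring. }
  exists (- term_coef g 0); intros t.
  rewrite (Hexp cos t cos_chebyshev_rec), cos_0.
  unfold Cpoly; rewrite rsum_1, (lsum_ext_in _ _ (fun j => term_coef g j * cos (INR j * t)));
    [ring|].
  intros j Hj; apply in_seq in Hj; rewrite Hcoef by lia; reflexivity.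
Qed.

Theorem lemma5 (n m : nat) (a tt b : nat -> R) :
  (4 <= n)%nat ->
  (2 <= m)%nat -> (2 * m <= n)%nat ->
  (forall i, (1 <= i <= m)%nat -> 0 < tt i < PI) ->
  (forall i j, (1 <= i <= m)%nat -> (1 <= j <= m)%nat -> i <> j -> tt i <> tt j) ->
  (forall t : R,
     Spoly n a t =
     rprod 1 m (fun j => cos t - cos (tt j)) *
     rsum m (n - m) (fun k => b k * sin (INR k * t))) ->
  forall i j, (1 <= i <= m)%nat -> (1 <= j <= m)%nat ->
    Cpoly n a (tt i) = Cpoly n a (tt j).
Proof.
  intros _ _ Hmn _ _ HS i j Hi Hj.
  set (cs := map (fun k => cos (tt k)) (seq 1 m)).
  assert (Hlen : length cs = m) by (unfold cs; rewrite length_map, length_seq; auto).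
  assert (Hprod : forall t, rprod 1 m (fun k => cos t - cos (tt k)) = prod_cos_sub cs t).
  { intros t; unfold rprod, prod_cos_sub, cs; rewrite map_map.
    now replace (S m - 1)%nat with m by lia. }
  assert (Hroot : forall k, (1 <= k <= m)%nat -> prod_cos_sub cs (tt k) = 0).
  { intros k Hk; apply prod_cos_sub_root, (in_map (fun k => cos (tt k))), in_seq; lia. }
  destruct (Cpoly_of_factored_Spoly n a cs b m (n - m)) as [c0 HC]; try lia.
  { intros t; rewrite HS, Hprod; reflexivity. }
  rewrite !HC, !Hroot by auto; ring.
Qed.
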